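(* Let $X=L^2(0,1)$ and let $C:X\to X$ be the Cesàro operator $[Cx](s)=\frac1s\int_0^s x(t)\,dt$, $0<s\le1$. Let $u\in L^2(0,1)$ be given by $u(t)=0$ for $0\le t<1/2$ and $u(t)=1$ for $1/2\le t\le1$. Then there is a constant $K>0$ such that for all sufficiently large $R>0$ $$d(R):=\min\{\|u-Cw\|_{L^2(0,1)}:\ w\in L^2(0,1),\ \|w\|_{L^2(0,1)}\le R\}\le\frac KR.$$
   Context: $C$ is a bounded, injective, monotone, non-compact linear operator on $L^2(0,1)$. The function $u$ plays the role of $x^\dagger-\bar x$. *)

From Stdlib Require Import Reals Lra ClassicalEpsilon.
Open Scope R_scope.

(* Total Riemann integral on [a,b]: RiemannInt of f if f is Riemann
   integrable on [a,b], and 0 otherwise (the value does not depend on the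
   chosen integrability proof, by RiemannInt_P5). *)
Definition Rint (f : R -> R) (a b : R) : R :=
  match excluded_middle_informative (inhabited (Riemann_integrable f a b)) with
  | left H => RiemannInt (epsilon H (fun _ => True))
  | right _ => 0
  end.

Definition L2norm01 (f : R -> R) : R := sqrt (Rint (fun t => f t ^ 2) 0 1).

Definition cesaro (x : R -> R) (s : R) : R := / s * Rint x 0 s.

Definition u_half (t : R) : R := if Rlt_dec t (1/2) then 0 else 1.

(* Since [C] inverts [w |-> (s w(s))'] formally, [u = C w] would need
   [w = u + 1/2 delta_(1/2)].  Smearing that Dirac mass into the height
   [c = R^2/2] on [[1/2 - 1/R^2, 1/2]] gives [||w|| <= R], and [C w = u]
   everywhere except on that short interval, where [|u - C w| <= 2]; hence
   [||u - C w||^2 <= 4/R^2]. *)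

From Stdlib Require Import Reals Lra ClassicalEpsilon.
From Coquelicot Require Import Coquelicot.
Open Scope R_scope.

Lemma Rint_is_RInt (f : R -> R) a b v : is_RInt f a b v -> Rint f a b = v.
Proof.
  intros H. unfold Rint.
  destruct (excluded_middle_informative _) as [Hint | Hnot].
  - rewrite <- RInt_Reals. now apply is_RInt_unique.
  - exfalso. apply Hnot. constructor. apply ex_RInt_Reals_0. now exists v.
Qed.

Lemma is_RInt_const_on (f : R -> R) x y k :
  x <= y -> (forall t, x < t < y -> f t = k) -> is_RInt f x y (k * (y - x)).
Proof.
  intros Hxy Hf.
  replace (k * (y - x)) with (scal (y - x) k)
    by (unfold scal; simpl; unfold mult; simpl; ring).
  apply (is_RInt_ext (fun _ => k)); [|exact (is_RInt_const x y k)].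
  intros t Ht. rewrite Rmin_left in Ht by lra. rewrite Rmax_right in Ht by lra.
  symmetry. apply Hf. lra.
Qed.

Lemma is_RInt_zero_on (f : R -> R) x y :
  x <= y -> (forall t, x < t < y -> f t = 0) -> is_RInt f x y 0.
Proof.
  intros Hxy Hf. rewrite <- (Rmult_0_l (y - x)). now apply is_RInt_const_on.
Qed.

Lemma is_RInt_le_const (f : R -> R) x y l M :
  x <= y -> is_RInt f x y l -> (forall t, x < t < y -> f t <= M) ->
  l <= M * (y - x).
Proof.
  intros Hxy Hl Hf.
  apply (is_RInt_le f (fun _ => M) x y); [exact Hxy | exact Hl | |exact Hf].
  now apply is_RInt_const_on.
Qed.

Lemma is_RInt_Chasles_R (f : R -> R) a b c l1 l2 :
  is_RInt f a b l1 -> is_RInt f b c l2 -> is_RInt f a c (l1 + l2).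
Proof. exact (is_RInt_Chasles f a b c l1 l2). Qed.

Lemma L2norm01_le (f : R -> R) v M :
  is_RInt (fun t => f t ^ 2) 0 1 v -> 0 <= M -> v <= M ^ 2 -> L2norm01 f <= M.
Proof.
  intros Hv HM HvM. unfold L2norm01.
  rewrite (Rint_is_RInt _ 0 1 v Hv), <- (sqrt_pow2 M HM).
  now apply sqrt_le_1_alt.
Qed.

Definition smeared_preimage (a c t : R) : R :=
  if Rlt_dec t a then 0 else if Rlt_dec t (1/2) then c else 1.

Section SmearedPreimage.

Variables a c : R.
Hypothesis a_range : 1/4 <= a < 1/2.
Hypothesis smeared_mass : c * (1/2 - a) = 1/2.

Let w := smeared_preimage a c.

Lemma smeared_preimage_int_low s : 0 <= s <= a -> is_RInt w 0 s 0.
Proof.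
  intros Hs. apply is_RInt_zero_on; [lra|].
  intros t Ht. unfold w, smeared_preimage. destruct (Rlt_dec t a); lra.
Qed.

Lemma smeared_preimage_int_mid s : a <= s <= 1/2 -> is_RInt w 0 s (c * (s - a)).
Proof.
  intros Hs. replace (c * (s - a)) with (0 + c * (s - a)) by ring.
  apply (is_RInt_Chasles_R _ 0 a); [apply smeared_preimage_int_low; lra|].
  apply is_RInt_const_on; [lra|].
  intros t Ht. unfold w, smeared_preimage.
  destruct (Rlt_dec t a); [lra|]. destruct (Rlt_dec t (1/2)); lra.
Qed.

Lemma smeared_preimage_int_high s : 1/2 <= s -> is_RInt w 0 s s.
Proof.
  intros Hs. replace s with (c * (1/2 - a) + 1 * (s - 1/2)) at 2 by lra.
  apply (is_RInt_Chasles_R _ 0 (1/2)); [apply smeared_preimage_int_mid; lra|].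
  apply is_RInt_const_on; [lra|].
  intros t Ht. unfold w, smeared_preimage.
  destruct (Rlt_dec t a); [lra|]. destruct (Rlt_dec t (1/2)); lra.
Qed.

Lemma smeared_preimage_sq_int :
  is_RInt (fun t => w t ^ 2) 0 1 (c ^ 2 * (1/2 - a) + 1/2).
Proof.
  replace (c ^ 2 * (1/2 - a) + 1/2)
    with (0 * (a - 0) + c ^ 2 * (1/2 - a) + 1 ^ 2 * (1 - 1/2))
    by field.
  apply (is_RInt_Chasles_R _ _ (1/2)); [apply (is_RInt_Chasles_R _ _ a)|];
    apply is_RInt_const_on; try lra;
    intros t Ht; unfold w, smeared_preimage;
    destruct (Rlt_dec t a); try lra; destruct (Rlt_dec t (1/2)); lra.
Qed.

Let residual s := (u_half s - cesaro w s) ^ 2.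

Lemma residual_mid s : a < s < 1/2 -> residual s = (c * (s - a) / s) ^ 2.
Proof.
  intros Hs. unfold residual, cesaro, u_half.
  rewrite (Rint_is_RInt w 0 s _ (smeared_preimage_int_mid s ltac:(lra))).
  destruct (Rlt_dec s (1/2)); [|lra]. field. lra.
Qed.

Lemma residual_off_mid s : 0 < s < a \/ 1/2 < s -> residual s = 0.
Proof.
  intros [Hs | Hs]; unfold residual, cesaro, u_half.
  - rewrite (Rint_is_RInt w 0 s 0 (smeared_preimage_int_low s ltac:(lra))).
    destruct (Rlt_dec s (1/2)); [ring | lra].
  - rewrite (Rint_is_RInt w 0 s s (smeared_preimage_int_high s ltac:(lra))).
    destruct (Rlt_dec s (1/2)); [lra|]. field. lra.
Qed.

Lemma residual_le_mid s : a < s < 1/2 -> residual s <= 4.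
Proof.
  intros Hs. rewrite residual_mid by exact Hs.
  (* The smeared mass below [s] is at most [1/2], and [s >= 1/4]. *)
  assert (Hmass : 0 <= c * (s - a) <= 1/2) by nra.
  assert (Hinv : 0 < / s <= 4).
  { split; [apply Rinv_0_lt_compat; lra|].
    replace 4 with (/ (1/4)) by field. apply Rinv_le_contravar; lra. }
  assert (Hquot : 0 <= c * (s - a) / s <= 2) by (unfold Rdiv; nra).
  nra.
Qed.

Lemma ex_RInt_residual_mid : ex_RInt residual a (1/2).
Proof.
  apply (ex_RInt_ext (fun s => (c * (s - a) / s) ^ 2)).
  - intros s Hs. rewrite Rmin_left in Hs by lra. rewrite Rmax_right in Hs by lra.
    symmetry. now apply residual_mid.
  - apply (@ex_RInt_continuous R_CompleteNormedModule). intros z Hz.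
    rewrite Rmin_left in Hz by lra. rewrite Rmax_right in Hz by lra.
    apply (@ex_derive_continuous R_AbsRing R_NormedModule). auto_derive. lra.
Qed.

Lemma residual_int_le : exists l, is_RInt residual 0 1 l /\ l <= 4 * (1/2 - a).
Proof.
  destruct ex_RInt_residual_mid as [l Hl]. change R in l.
  exists (0 + l + 0). split.
  - apply (is_RInt_Chasles_R _ _ (1/2)); [apply (is_RInt_Chasles_R _ _ a)|].
    + apply is_RInt_zero_on; [lra|].
      intros t Ht. apply residual_off_mid. lra.
    + exact Hl.
    + apply is_RInt_zero_on; [lra|].
      intros t Ht. apply residual_off_mid. lra.
  - replace (0 + l + 0) with l by ring.
    exact (is_RInt_le_const residual a (1/2) l 4 ltac:(lra) Hl residual_le_mid).
Qed.

End SmearedPreimage.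

Theorem proposition4p3 :
  exists K : R, 0 < K /\
  exists R0 : R, forall Rr : R, R0 <= Rr ->
    exists w : R -> R,
      inhabited (Riemann_integrable w 0 1) /\
      L2norm01 w <= Rr /\
      L2norm01 (fun s => u_half s - cesaro w s) <= K / Rr.
Proof.
  exists 2. split; [lra|]. exists 2. intros Rr HR.
  set (a := 1/2 - / Rr ^ 2). set (c := Rr ^ 2 / 2).
  assert (Hinv : 0 < / Rr ^ 2 <= 1/4).
  { split; [apply Rinv_0_lt_compat; nra|].
    replace (1/4) with (/ 4) by field. apply Rinv_le_contravar; nra. }
  assert (Ha : 1/4 <= a < 1/2) by (unfold a; lra).
  assert (Hmass : c * (1/2 - a) = 1/2) by (unfold a, c; field; lra).
  exists (smeared_preimage a c). split; [|split].
  - constructor. apply ex_RInt_Reals_0. exists 1.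
    apply smeared_preimage_int_high; [exact Ha | exact Hmass | lra].
  - apply (L2norm01_le _ _ _ (smeared_preimage_sq_int a c Ha)); [lra|].
    replace (c ^ 2 * (1/2 - a)) with (c * (c * (1/2 - a))) by ring.
    rewrite Hmass. unfold c. nra.
  - destruct (residual_int_le a c Ha Hmass) as [l [Hl Hle]].
    apply (L2norm01_le _ l _ Hl); [apply Rlt_le, Rdiv_lt_0_compat; lra|].
    replace ((2 / Rr) ^ 2) with (4 * (1/2 - a)) by (unfold a; field; lra).
    exact Hle.
Qed.
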